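(* Let $S$ be an abundant semigroup and $S^0$ a quasi-ideal adequate transversal of $S$ (i.e. an adequate transversal with $S^0SS^0\subseteq S^0$). Let $R=\{x\in S:e_x=e_{\bar x}\}$ and $L=\{x\in S: f_x=f_{\bar x}\}$. Then $L$ and $R$ are subsemigroups of $S$, $L$ is left adequate, $R$ is right adequate, and $S^0$ is a quasi-ideal adequate transversal of both $L$ and $R$.
   Context: For a semigroup $S$, $\mathcal{R}^\ast=\{(a,b): \text{for all } x,y\in S^1,\ xa=ya \iff xb=yb\}$ and $\mathcal{L}^\ast$ dually. $S$ is abundant if every $\mathcal{R}^\ast$-class and $\mathcal{L}^\ast$-class contains an idempotent; adequate if abundant with commuting idempotents; left (resp. right) adequate if abundant and every $\mathcal{R}^\ast$-class (resp. $\mathcal{L}^\ast$-class) contains a unique idempotent. In an adequate semigroup $a^+,a^\ast$ are the unique idempotents $\mathcal{R}^\ast$-, resp. $\mathcal{L}^\ast$-related to $a$. A subsemigroup $U$ of abundant $S$ is a $\ast$-subsemigroup if $U$ is abundant and $\mathcal{L}^\ast_U=\mathcal{L}^\ast_S\cap(U\times U)$, $\mathcal{R}^\ast_U=\mathcal{R}^\ast_S\cap(U\times U)$. An adequate $\ast$-subsemigroup $S^0$ of abundant $S$ is an adequate transversal if for each $x\in S$ there is a unique $\bar x\in S^0$ and idempotents $e,f$ of $S$ with $x=e\bar xf$, $e\,\mathcal{L}\,\bar x^+$, $f\,\mathcal{R}\,\bar x^\ast$ ($\mathcal{L},\mathcal{R}$ Green's relations); these $e,f$ are unique and denoted $e_x,f_x$.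 A quasi-ideal adequate transversal is one with $S^0SS^0\subseteq S^0$. *)

Set Implicit Arguments.

Section Semigroups.
Context {T : Type}.
Variable mul : T -> T -> T.

(* Membership in A^1 : None plays the role of the adjoined identity 1. *)
Definition in1 (A : T -> Prop) (x : option T) : Prop :=
  match x with None => True | Some y => A y end.
Definition lmul (x : option T) (a : T) : T :=
  match x with None => a | Some y => mul y a end.
Definition rmul (a : T) (x : option T) : T :=
  match x with None => a | Some y => mul a y end.

Definition idem (e : T) : Prop := mul e e = e.

Definition Rstar (A : T -> Prop) (a b : T) : Prop :=
  forall x y, in1 A x -> in1 A y ->
    (lmul x a = lmul y a <-> lmul x b = lmul y b).
Definition Lstar (A : T -> Prop) (a b : T) : Prop :=
  forall x y, in1 A x -> in1 A y ->
    (rmul a x = rmul a y <-> rmul b x = rmul b y).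

Definition GreenL (A : T -> Prop) (a b : T) : Prop :=
  exists x y, in1 A x /\ in1 A y /\ a = lmul x b /\ b = lmul y a.
Definition GreenR (A : T -> Prop) (a b : T) : Prop :=
  exists x y, in1 A x /\ in1 A y /\ a = rmul b x /\ b = rmul a y.

Definition subsemigroup (B A : T -> Prop) : Prop :=
  (forall x, B x -> A x) /\ (forall x y, B x -> B y -> B (mul x y)).

Definition abundant (A : T -> Prop) : Prop :=
  forall a, A a ->
    (exists e, A e /\ idem e /\ Rstar A a e) /\
    (exists f, A f /\ idem f /\ Lstar A a f).

Definition adequate (A : T -> Prop) : Prop :=
  abundant A /\
  (forall e f, A e -> A f -> idem e -> idem f -> mul e f = mul f e).

Definition left_adequate (A : T -> Prop) : Prop :=
  abundant A /\
  (forall a e f, A a -> A e -> A f -> idem e -> idem f ->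
     Rstar A a e -> Rstar A a f -> e = f).

Definition right_adequate (A : T -> Prop) : Prop :=
  abundant A /\
  (forall a e f, A a -> A e -> A f -> idem e -> idem f ->
     Lstar A a e -> Lstar A a f -> e = f).

Definition star_subsemigroup (U A : T -> Prop) : Prop :=
  subsemigroup U A /\ abundant U /\
  (forall a b, U a -> U b ->
     (Lstar U a b <-> Lstar A a b) /\ (Rstar U a b <-> Rstar A a b)).

Definition plus_of (U : T -> Prop) (a g : T) : Prop :=
  U g /\ idem g /\ Rstar U a g.
Definition star_of (U : T -> Prop) (a g : T) : Prop :=
  U g /\ idem g /\ Lstar U a g.

Definition decomp (A S0 : T -> Prop) (x xb e f : T) : Prop :=
  S0 xb /\ A e /\ A f /\ idem e /\ idem f /\ x = mul (mul e xb) f /\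
  (exists g, plus_of S0 xb g /\ GreenL A e g) /\
  (exists h, star_of S0 xb h /\ GreenR A f h).

Definition adequate_transversal (S0 A : T -> Prop) : Prop :=
  adequate S0 /\ star_subsemigroup S0 A /\
  (forall x, A x ->
     exists xb, (exists e f, decomp A S0 x xb e f) /\
       (forall xb', (exists e f, decomp A S0 x xb' e f) -> xb' = xb)).

Definition qi_adequate_transversal (S0 A : T -> Prop) : Prop :=
  adequate_transversal S0 A /\
  (forall a b c, S0 a -> A b -> S0 c -> S0 (mul (mul a b) c)).

Definition Rset (A S0 : T -> Prop) (x : T) : Prop :=
  A x /\ exists xb e f xbb e' f',
    decomp A S0 x xb e f /\ decomp A S0 xb xbb e' f' /\ e = e'.
Definition Lset (A S0 : T -> Prop) (x : T) : Prop :=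
  A x /\ exists xb e f xbb e' f',
    decomp A S0 x xb e f /\ decomp A S0 xb xbb e' f' /\ f = f'.

End Semigroups.

From Stdlib Require Import FunctionalExtensionality PropExtensionality.

(* Every x in S factors uniquely as x = e_x x̄ f_x with e_x L x̄^+ and
   f_x R x̄^*, and then x R* e_x and x L* f_x.  Since f_x̄ = x̄^*, the set L
   consists of the x with f_x in S0.  For x, y in L the quasi-ideal property
   puts z = x̄ f_x e_y ȳ in S0, and xy = (e_x z^+) z (z^* f_y) is the
   factorization of xy, so L is closed under products.  Two idempotents of L
   that are R*-related in L are then L-related to elements p, q of S0, and
   uniqueness of the factorization of their product forces p = q, hence e = f.
   The statements about R follow by passing to the opposite semigroup. *)

Definition dual {T : Type} (mul : T -> T -> T) : T -> T -> T := fun a b => mul b a.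

Lemma dual_assoc {T : Type} (mul : T -> T -> T) :
  (forall a b c, mul a (mul b c) = mul (mul a b) c) ->
  forall a b c, dual mul a (dual mul b c) = dual mul (dual mul a b) c.
Proof. intros assoc a b c; unfold dual; symmetry; apply assoc. Qed.

Section StarRelations.
Context {T : Type} {mul : T -> T -> T}.

Lemma in1_mono (A B : T -> Prop) u : (forall y, B y -> A y) -> in1 B u -> in1 A u.
Proof. destruct u; simpl; auto. Qed.

Lemma Rstar_refl A a : Rstar mul A a a.
Proof. intros x y _ _; tauto. Qed.

Lemma Rstar_sym A a b : Rstar mul A a b -> Rstar mul A b a.
Proof. intros H x y Hx Hy; specialize (H x y Hx Hy); tauto. Qed.

Lemma Rstar_trans A a b c : Rstar mul A a b -> Rstar mul A b c -> Rstar mul A a c.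
Proof.
  intros H1 H2 x y Hx Hy; specialize (H1 x y Hx Hy); specialize (H2 x y Hx Hy); tauto.
Qed.

Lemma Rstar_mono (A B : T -> Prop) a b :
  (forall x, B x -> A x) -> Rstar mul A a b -> Rstar mul B a b.
Proof. intros HBA H x y Hx Hy; apply H; eapply in1_mono; eauto. Qed.

Lemma Rstar_idem A e f : A e -> idem mul e -> Rstar mul A e f -> mul e f = f.
Proof. intros Ae Ie H; exact (proj1 (H (Some e) None Ae I) Ie). Qed.

Lemma Rstar_idem_comm_eq A e f : A e -> A f -> idem mul e -> idem mul f ->
  Rstar mul A e f -> mul e f = mul f e -> e = f.
Proof.
  intros Ae Af Ie If Hef Hcomm.
  rewrite <- (Rstar_idem A f e Af If (Rstar_sym A e f Hef)), <- Hcomm.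
  exact (Rstar_idem A e f Ae Ie Hef).
Qed.

End StarRelations.

(* L* for [mul] is, by conversion, R* for [dual mul]. *)
Section LstarRelations.
Context {T : Type} {mul : T -> T -> T}.

Lemma Lstar_refl A a : Lstar mul A a a.
Proof. exact (@Rstar_refl T (dual mul) A a). Qed.

Lemma Lstar_sym A a b : Lstar mul A a b -> Lstar mul A b a.
Proof. exact (@Rstar_sym T (dual mul) A a b). Qed.

Lemma Lstar_trans A a b c : Lstar mul A a b -> Lstar mul A b c -> Lstar mul A a c.
Proof. exact (@Rstar_trans T (dual mul) A a b c). Qed.

Lemma Lstar_mono (A B : T -> Prop) a b :
  (forall x, B x -> A x) -> Lstar mul A a b -> Lstar mul B a b.
Proof. exact (@Rstar_mono T (dual mul) A B a b). Qed.

Lemma Lstar_idem A e f : A e -> idem mul e -> Lstar mul A e f -> mul f e = f.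
Proof. exact (@Rstar_idem T (dual mul) A e f). Qed.

Lemma Lstar_idem_comm_eq A e f : A e -> A f -> idem mul e -> idem mul f ->
  Lstar mul A e f -> mul e f = mul f e -> e = f.
Proof.
  intros Ae Af Ie If Hef Hcomm.
  exact (@Rstar_idem_comm_eq T (dual mul) A e f Ae Af Ie If Hef (eq_sym Hcomm)).
Qed.

End LstarRelations.

Section Restriction.
Context {T : Type} {mul : T -> T -> T}.

Lemma decomp_mono (A B S0 : T -> Prop) x xb e f : (forall y, B y -> A y) ->
  decomp mul B S0 x xb e f -> decomp mul A S0 x xb e f.
Proof.
  intros HBA (Hxb & Be & Bf & Ie & If & Hx & (g & Hg & (u & v & Bu & Bv & Hu & Hv))
                & (h & Hh & (u' & v' & Bu' & Bv' & Hu' & Hv'))).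
  refine (conj Hxb (conj (HBA _ Be) (conj (HBA _ Bf) (conj Ie (conj If (conj Hx (conj _ _))))))).
  - exists g; split; [exact Hg|].
    exists u, v; split; [|split]; [eapply in1_mono; eauto | eapply in1_mono; eauto | auto].
  - exists h; split; [exact Hh|].
    exists u', v'; split; [|split]; [eapply in1_mono; eauto | eapply in1_mono; eauto | auto].
Qed.

Lemma star_subsemigroup_restrict (U B A : T -> Prop) :
  (forall x, B x -> A x) -> (forall x, U x -> B x) ->
  star_subsemigroup mul U A -> star_subsemigroup mul U B.
Proof.
  intros HBA HUB ((_ & Hcl) & Hab & Hrel).
  split; [split; [exact HUB | exact Hcl]|]. split; [exact Hab|].
  intros a b Ua Ub. destruct (Hrel a b Ua Ub) as [HL HR]. split; split.
  - intros H. exact (Lstar_mono A B a b HBA (proj1 HL H)).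
  - exact (Lstar_mono B U a b HUB).
  - intros H. exact (Rstar_mono A B a b HBA (proj1 HR H)).
  - exact (Rstar_mono B U a b HUB).
Qed.

End Restriction.

Lemma subsemigroup_dual {T : Type} (mul : T -> T -> T) (B A : T -> Prop) :
  subsemigroup (dual mul) B A -> subsemigroup mul B A.
Proof. intros [Hincl Hcl]; split; [exact Hincl | intros x y Bx By; exact (Hcl y x By Bx)]. Qed.

Lemma abundant_dual {T : Type} (mul : T -> T -> T) (A : T -> Prop) :
  abundant mul A -> abundant (dual mul) A.
Proof. intros H a Aa; destruct (H a Aa) as [He Hf]; split; [exact Hf | exact He]. Qed.

Lemma right_adequate_of_dual {T : Type} (mul : T -> T -> T) (A : T -> Prop) :
  left_adequate (dual mul) A -> right_adequate mul A.
Proof. intros [Hab Huniq]; split; [exact (abundant_dual (dual mul) A Hab) | exact Huniq]. Qed.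

Lemma decomp_dual {T : Type} (mul : T -> T -> T)
  (assoc : forall a b c, mul a (mul b c) = mul (mul a b) c) (A S0 : T -> Prop) x xb e f :
  decomp mul A S0 x xb e f -> decomp (dual mul) A S0 x xb f e.
Proof.
  intros (Hxb & Ae & Af & Ie & If & Hx & Hg & Hh).
  refine (conj Hxb (conj Af (conj Ae (conj If (conj Ie (conj _ (conj Hh Hg))))))).
  unfold dual; rewrite Hx; symmetry; apply assoc.
Qed.

Lemma qi_adequate_transversal_dual {T : Type} (mul : T -> T -> T)
  (assoc : forall a b c, mul a (mul b c) = mul (mul a b) c) (S0 A : T -> Prop) :
  qi_adequate_transversal mul S0 A -> qi_adequate_transversal (dual mul) S0 A.
Proof.
  intros [[[HabS0 Hcomm] [[[Hincl Hcl] [HabU Hrel]] Htr]] Hqi].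
  split; [split; [|split]|].
  - split; [exact (abundant_dual mul S0 HabS0)|].
    intros e f Se Sf Ie If; exact (Hcomm f e Sf Se If Ie).
  - split; [split; [exact Hincl | intros x y Sx Sy; exact (Hcl y x Sy Sx)]|].
    split; [exact (abundant_dual mul S0 HabU)|].
    intros a b Sa Sb; destruct (Hrel a b Sa Sb) as [HL HR]; split; [exact HR | exact HL].
  - intros x Ax. destruct (Htr x Ax) as [xb [[e [f Hd]] Huniq]].
    exists xb; split; [exists f, e; exact (decomp_dual mul assoc A S0 x xb e f Hd)|].
    intros xb' [e' [f' Hd']]. apply Huniq. exists f', e'.
    exact (decomp_dual (dual mul) (dual_assoc mul assoc) A S0 x xb' e' f' Hd').
  - intros a b c Sa Ab Sc; unfold dual; rewrite assoc; exact (Hqi c b a Sc Ab Sa).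
Qed.

Lemma Rset_dual {T : Type} (mul : T -> T -> T)
  (assoc : forall a b c, mul a (mul b c) = mul (mul a b) c) (A S0 : T -> Prop) :
  Rset mul A S0 = Lset (dual mul) A S0.
Proof.
  pose proof (decomp_dual mul assoc A S0) as todual.
  pose proof (decomp_dual (dual mul) (dual_assoc mul assoc) A S0) as undual.
  apply functional_extensionality; intros x; apply propositional_extensionality; split.
  - intros [Ax (xb & e & f & xbb & e' & f' & Hx & Hxb & Ee)]; split; [exact Ax|].
    exists xb, f, e, xbb, f', e'.
    exact (conj (todual _ _ _ _ Hx) (conj (todual _ _ _ _ Hxb) Ee)).
  - intros [Ax (xb & e & f & xbb & e' & f' & Hx & Hxb & Ef)]; split; [exact Ax|].
    exists xb, f, e, xbb, f', e'.
    exact (conj (undual _ _ _ _ Hx) (conj (undual _ _ _ _ Hxb) Ef)).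
Qed.

(** * Factorizations through the transversal *)

Section Factorization.
Context {T : Type} (mul : T -> T -> T).
Hypothesis assoc : forall a b c, mul a (mul b c) = mul (mul a b) c.
Context (S0 : T -> Prop).
Local Notation S := (fun _ : T => True).
Local Infix "·" := mul (at level 40, left associativity).

Definition is_plus a g : Prop := S0 g /\ idem mul g /\ Rstar mul S a g.
Definition is_star a h : Prop := S0 h /\ idem mul h /\ Lstar mul S a h.

(* [decomp] over all of S, with e L g and f R h written as equations. *)
Definition factors x xb e f : Prop :=
  S0 xb /\ idem mul e /\ idem mul f /\ x = e·xb·f /\
  (exists g, is_plus xb g /\ e·g = e /\ g·e = g) /\
  (exists h, is_star xb h /\ h·f = f /\ f·h = h).

Lemma is_plus_left_id a g : is_plus a g -> g·a = a.
Proof. intros (_ & Ig & Hag); exact (Rstar_idem S g a I Ig (Rstar_sym S a g Hag)). Qed.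

Lemma is_star_right_id a h : is_star a h -> a·h = a.
Proof. intros (_ & Ih & Hah); exact (Lstar_idem S h a I Ih (Lstar_sym S a h Hah)). Qed.

Lemma lmul_assoc u a b : lmul mul u (a·b) = lmul mul u a · b.
Proof. destruct u; simpl; [apply assoc | reflexivity]. Qed.

Lemma factors_Rstar x xb e f : factors x xb e f -> Rstar mul S x e.
Proof.
  intros (_ & _ & _ & -> & (g & (_ & _ & Hxbg) & Heg & _) & (h & Hh & _ & Hfh)) u v _ _.
  rewrite !lmul_assoc; split; intros H; [|now rewrite H].
  (* cancel f on the right with h = xb^*, then xb with g = xb^+ *)
  apply (f_equal (fun t => t·h)) in H.
  rewrite <- !assoc, Hfh, (is_star_right_id _ _ Hh) in H.
  apply (proj1 (Hxbg (Some (lmul mul u e)) (Some (lmul mul v e)) I I)) in H; simpl in H.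
  now rewrite <- !lmul_assoc, Heg in H.
Qed.

End Factorization.

Lemma factors_dual {T : Type} (mul : T -> T -> T)
  (assoc : forall a b c, mul a (mul b c) = mul (mul a b) c) S0 x xb e f :
  factors mul S0 x xb e f -> factors (dual mul) S0 x xb f e.
Proof.
  intros (Hxb & Ie & If & Hx & Hg & Hh).
  refine (conj Hxb (conj If (conj Ie (conj _ (conj Hh Hg))))).
  unfold dual; rewrite Hx; symmetry; apply assoc.
Qed.

Lemma factors_Lstar {T : Type} (mul : T -> T -> T)
  (assoc : forall a b c, mul a (mul b c) = mul (mul a b) c) S0 x xb e f :
  factors mul S0 x xb e f -> Lstar mul (fun _ => True) x f.
Proof.
  intros H.
  exact (factors_Rstar (dual mul) (dual_assoc mul assoc) S0 x xb f e (factors_dual mul assoc S0 x xb e f H)).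
Qed.

Section QuasiIdealTransversal.
Context {T : Type} (mul : T -> T -> T).
Hypothesis assoc : forall a b c, mul a (mul b c) = mul (mul a b) c.
Context (S0 : T -> Prop).
Hypothesis hS0 : qi_adequate_transversal mul S0 (fun _ => True).
Local Notation S := (fun _ : T => True).
Local Infix "·" := mul (at level 40, left associativity).
Local Notation is_plus := (is_plus mul S0).
Local Notation is_star := (is_star mul S0).
Local Notation factors := (factors mul S0).

Lemma mul_rewrite_r a b c : a·b = c -> forall r, a·(b·r) = c·r.
Proof. intros H r; rewrite assoc, H; reflexivity. Qed.

Local Ltac normalize := repeat rewrite <- assoc.
Local Ltac rw_prod H := repeat (rewrite (mul_rewrite_r _ _ _ H) || rewrite H).

Lemma S0_mul a b : S0 a -> S0 b -> S0 (a·b).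
Proof. destruct hS0 as [[_ [[[_ Hcl] _] _]] _]; apply Hcl. Qed.

Lemma S0_idem_comm e f : S0 e -> S0 f -> idem mul e -> idem mul f -> e·f = f·e.
Proof. destruct hS0 as [[[_ Hcomm] _] _]; apply Hcomm. Qed.

Lemma S0_quasi_ideal a b c : S0 a -> S0 c -> S0 (a·b·c).
Proof. destruct hS0 as [_ Hqi]; intros Sa Sc; exact (Hqi a b c Sa I Sc). Qed.

Lemma is_plus_iff a g : S0 a -> is_plus a g <-> plus_of mul S0 a g.
Proof.
  destruct hS0 as [[_ [[_ [_ Hrel]] _]] _]; intros Sa.
  split; intros (Sg & Ig & H); (split; [exact Sg | split; [exact Ig|]]);
    apply (proj2 (Hrel a g Sa Sg)); exact H.
Qed.

Lemma is_star_iff a h : S0 a -> is_star a h <-> star_of mul S0 a h.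
Proof.
  destruct hS0 as [[_ [[_ [_ Hrel]] _]] _]; intros Sa.
  split; intros (Sh & Ih & H); (split; [exact Sh | split; [exact Ih|]]);
    apply (proj1 (Hrel a h Sa Sh)); exact H.
Qed.

Lemma plus_exists a : S0 a -> exists g, is_plus a g.
Proof.
  destruct hS0 as [[[Hab _] _] _]; intros Sa.
  destruct (Hab a Sa) as [[g Hg] _]; exists g; apply is_plus_iff; assumption.
Qed.

Lemma star_exists a : S0 a -> exists h, is_star a h.
Proof.
  destruct hS0 as [[[Hab _] _] _]; intros Sa.
  destruct (Hab a Sa) as [_ [h Hh]]; exists h; apply is_star_iff; assumption.
Qed.

Lemma plus_unique a g g' : is_plus a g -> is_plus a g' -> g = g'.
Proof.
  intros (Sg & Ig & Hag) (Sg' & Ig' & Hag').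
  apply (@Rstar_idem_comm_eq T mul S); auto.
  - exact (Rstar_trans S g a g' (Rstar_sym S a g Hag) Hag').
  - apply S0_idem_comm; assumption.
Qed.

Lemma star_unique a h h' : is_star a h -> is_star a h' -> h = h'.
Proof.
  intros (Sh & Ih & Hah) (Sh' & Ih' & Hah').
  apply (@Lstar_idem_comm_eq T mul S); auto.
  - exact (Lstar_trans S h a h' (Lstar_sym S a h Hah) Hah').
  - apply S0_idem_comm; assumption.
Qed.

Lemma factors_of_decomp x xb e f : decomp mul S S0 x xb e f -> factors x xb e f.
Proof.
  intros (Sxb & _ & _ & Ie & If & Hx & (g & Hg & (u & v & _ & _ & Hu & Hv))
          & (h & Hh & (u' & v' & _ & _ & Hu' & Hv'))).
  apply is_plus_iff in Hg; apply is_star_iff in Hh; try exact Sxb.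
  pose proof (proj1 (proj2 Hg)) as Ig; pose proof (proj1 (proj2 Hh)) as Ih.
  unfold idem in *.
  refine (conj Sxb (conj Ie (conj If (conj Hx (conj _ _))))).
  - exists g; split; [exact Hg|]; split.
    + rewrite Hu, <- (lmul_assoc mul assoc), Ig; reflexivity.
    + rewrite Hv, <- (lmul_assoc mul assoc), Ie; reflexivity.
  - exists h; split; [exact Hh|]; split.
    + rewrite Hu'; destruct u'; simpl; [rewrite assoc|]; rewrite Ih; reflexivity.
    + rewrite Hv'; destruct v'; simpl; [rewrite assoc|]; rewrite If; reflexivity.
Qed.

Lemma decomp_of_factors (B : T -> Prop) x xb e f :
  (forall y, S0 y -> B y) -> B e -> B f ->
  factors x xb e f -> decomp mul B S0 x xb e f.
Proof.
  intros HS0B Be Bf (Sxb & Ie & If & Hx & (g & Hg & Heg & Hge) & (h & Hh & Hhf & Hfh)).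
  refine (conj Sxb (conj Be (conj Bf (conj Ie (conj If (conj Hx (conj _ _))))))).
  - exists g; split; [apply is_plus_iff; assumption|].
    exists (Some e), (Some g); simpl.
    split; [exact Be | split; [exact (HS0B g (proj1 Hg)) | split; symmetry; assumption]].
  - exists h; split; [apply is_star_iff; assumption|].
    exists (Some f), (Some h); simpl.
    split; [exact Bf | split; [exact (HS0B h (proj1 Hh)) | split; symmetry; assumption]].
Qed.

Lemma factors_bar_unique x xb e f xb' e' f' :
  factors x xb e f -> factors x xb' e' f' -> xb = xb'.
Proof.
  destruct hS0 as [[_ [_ Htr]] _]; intros H H'.
  destruct (Htr x I) as [xb0 [_ Huniq]].
  assert (Hdecomp : forall xb e f, factors x xb e f -> exists e f, decomp mul S S0 x xb e f)
    by (intros ? e0 f0 Hf; exists e0, f0; apply decomp_of_factors; auto).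
  rewrite (Huniq xb (Hdecomp _ _ _ H)), (Huniq xb' (Hdecomp _ _ _ H')); reflexivity.
Qed.

Lemma factors_unique x xb e f xb' e' f' :
  factors x xb e f -> factors x xb' e' f' -> xb = xb' /\ e = e' /\ f = f'.
Proof.
  intros H H'.
  pose proof (factors_bar_unique _ _ _ _ _ _ _ H H') as <-.
  pose proof (factors_Rstar mul assoc S0 _ _ _ _ H) as Rxe.
  pose proof (factors_Rstar mul assoc S0 _ _ _ _ H') as Rxe'.
  pose proof (factors_Lstar mul assoc S0 _ _ _ _ H) as Lxf.
  pose proof (factors_Lstar mul assoc S0 _ _ _ _ H') as Lxf'.
  destruct H as (_ & Ie & If & _ & (g & Hg & Heg & _) & (h & Hh & _ & Hfh)).
  destruct H' as (_ & Ie' & If' & _ & (g' & Hg' & _ & Hg'e') & (h' & Hh' & Hh'f' & _)).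
  rewrite <- (plus_unique _ _ _ Hg Hg') in Hg'e'.
  rewrite <- (star_unique _ _ _ Hh Hh') in Hh'f'.
  split; [reflexivity | split].
  - symmetry.
    rewrite <- (Rstar_idem S e e' I Ie (Rstar_trans S e x e' (Rstar_sym S x e Rxe) Rxe')).
    rewrite <- Heg, <- assoc, Hg'e'; reflexivity.
  - rewrite <- (Lstar_idem S f' f I If' (Lstar_trans S f' x f (Lstar_sym S x f' Lxf') Lxf)).
    rewrite <- Hh'f', assoc, Hfh; reflexivity.
Qed.

Lemma factors_S0 a g h : S0 a -> is_plus a g -> is_star a h -> factors a a g h.
Proof.
  intros Sa Hg Hh.
  pose proof (proj1 (proj2 Hg)) as Ig; pose proof (proj1 (proj2 Hh)) as Ih.
  refine (conj Sa (conj Ig (conj Ih (conj _ (conj _ _))))).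
  - rewrite (is_plus_left_id _ _ _ _ Hg), (is_star_right_id _ _ _ _ Hh); reflexivity.
  - exists g; exact (conj Hg (conj Ig Ig)).
  - exists h; exact (conj Hh (conj Ih Ih)).
Qed.

Lemma factors_of_Lrel e p : S0 p -> idem mul p -> idem mul e ->
  e·p = e -> p·e = p -> factors e p e p.
Proof.
  intros Sp Ip Ie Hep Hpe.
  refine (conj Sp (conj Ie (conj Ip (conj _ (conj _ _))))).
  - rewrite Hep, Hep; reflexivity.
  - exists p; exact (conj (conj Sp (conj Ip (Rstar_refl S p))) (conj Hep Hpe)).
  - exists p; exact (conj (conj Sp (conj Ip (Lstar_refl S p))) (conj Ip Ip)).
Qed.

Lemma plus_mul_left a b ga g : is_plus a ga -> is_plus (a·b) g -> g·ga = g.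
Proof.
  intros Hga (Sg & Ig & Habg).
  assert (Hgaab : ga·(a·b) = a·b) by (rewrite assoc, (is_plus_left_id _ _ _ _ Hga); reflexivity).
  rewrite (S0_idem_comm g ga Sg (proj1 Hga) Ig (proj1 (proj2 Hga))).
  exact (proj1 (Habg (Some ga) None I I) Hgaab).
Qed.

Lemma star_mul_right a b hb h : is_star b hb -> is_star (a·b) h -> hb·h = h.
Proof.
  intros Hhb (Sh & Ih & Habh).
  assert (Habhb : a·b·hb = a·b) by (rewrite <- assoc, (is_star_right_id _ _ _ _ Hhb); reflexivity).
  rewrite (S0_idem_comm hb h (proj1 Hhb) Sh (proj1 (proj2 Hhb)) Ih).
  exact (proj1 (Habh (Some hb) None I I) Habhb).
Qed.

Lemma factors_mul x xb e f y yb e' f' g h :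
  factors x xb e f -> factors y yb e' f' ->
  is_plus (xb·(f·e')·yb) g -> is_star (xb·(f·e')·yb) h ->
  factors (x·y) (xb·(f·e')·yb) (e·g) (h·f').
Proof.
  intros (Sxb & Ie & If & -> & (gx & Hgx & _ & Hgxe) & _)
         (Syb & Ie' & If' & -> & _ & (hy & Hhy & _ & Hf'hy)) Hg Hh.
  remember (xb·(f·e')·yb) as z eqn:Ez.
  assert (Hggx : g·gx = g).
  { apply (plus_mul_left xb (f·e'·yb) gx g Hgx); rewrite assoc, <- Ez; exact Hg. }
  assert (Hhyh : hy·h = h).
  { apply (star_mul_right (xb·(f·e')) yb hy h Hhy); rewrite <- Ez; exact Hh. }
  assert (Hge : g·e = g) by (rewrite <- Hggx, <- assoc, Hgxe; reflexivity).
  assert (Hf'h : f'·h = h) by (rewrite <- Hhyh, assoc, Hf'hy; reflexivity).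
  pose proof (is_plus_left_id _ _ _ _ Hg) as Hgz.
  pose proof (is_star_right_id _ _ _ _ Hh) as Hzh.
  pose proof (proj1 (proj2 Hg)) as Ig; pose proof (proj1 (proj2 Hh)) as Ih.
  refine (conj _ (conj _ (conj _ (conj _ (conj _ _))))); unfold idem in *.
  - rewrite Ez; apply S0_quasi_ideal; assumption.
  - normalize; rw_prod Hge; rw_prod Ig; reflexivity.
  - normalize; rw_prod Hf'h; rw_prod Ih; reflexivity.
  - normalize; rw_prod Hgz; rw_prod Hzh; rewrite Ez; normalize; reflexivity.
  - exists g; split; [exact Hg | split; normalize; [rw_prod Ig | rw_prod Hge; rw_prod Ig]; reflexivity].
  - exists h; split; [exact Hh | split; normalize; [rw_prod Ih | rw_prod Hf'h; rw_prod Ih]; reflexivity].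
Qed.

(** * The subsemigroup L *)

(* f_x̄ = x̄^* lies in S0, so L is the set of x with f_x in S0. *)
Definition right_factor_in_S0 x : Prop := exists xb e f, factors x xb e f /\ S0 f.

Lemma S0_right_factor_in_S0 a : S0 a -> right_factor_in_S0 a.
Proof.
  intros Sa; destruct (plus_exists a Sa) as [g Hg]; destruct (star_exists a Sa) as [h Hh].
  exists a, g, h; exact (conj (factors_S0 a g h Sa Hg Hh) (proj1 Hh)).
Qed.

Lemma Lset_iff x : Lset mul S S0 x <-> right_factor_in_S0 x.
Proof.
  split.
  - intros [_ (xb & e & f & xbb & e' & f' & Hx & Hxb & ->)].
    apply factors_of_decomp in Hx; apply factors_of_decomp in Hxb.
    pose proof (proj1 Hx) as Sxb.
    destruct (plus_exists xb Sxb) as [g Hg]; destruct (star_exists xb Sxb) as [h Hh].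
    destruct (factors_unique _ _ _ _ _ _ _ Hxb (factors_S0 xb g h Sxb Hg Hh)) as (_ & _ & ->).
    exists xb, e, h; exact (conj Hx (proj1 Hh)).
  - intros (xb & e & f & Hx & Sf).
    pose proof Hx as (Sxb & _ & If & _ & _ & (h & Hh & Hhf & Hfh)).
    destruct (plus_exists xb Sxb) as [g Hg].
    assert (Efh : f = h)
      by (rewrite <- Hhf, <- (S0_idem_comm f h Sf (proj1 Hh) If (proj1 (proj2 Hh))); exact Hfh).
    split; [exact I|]; exists xb, e, f, xb, g, h.
    split; [|split; [|exact Efh]]; apply decomp_of_factors; auto.
    apply factors_S0; assumption.
Qed.

Lemma Lset_eq : Lset mul S S0 = right_factor_in_S0.
Proof.
  apply functional_extensionality; intros x; apply propositional_extensionality; apply Lset_iff.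
Qed.

Lemma left_factor_in_L x xb e f : factors x xb e f -> right_factor_in_S0 e.
Proof.
  intros (_ & Ie & _ & _ & (g & (Sg & Ig & _) & Heg & Hge) & _).
  exists g, e, g; exact (conj (factors_of_Lrel e g Sg Ig Ie Heg Hge) Sg).
Qed.

Lemma L_idem_Lrel e : right_factor_in_S0 e -> idem mul e ->
  exists p, S0 p /\ idem mul p /\ e·p = e /\ p·e = p.
Proof.
  intros (xb & e0 & p & He & Sp) Ie.
  pose proof (factors_Lstar mul assoc S0 _ _ _ _ He) as Lep.
  pose proof (proj1 (proj2 (proj2 He))) as Ip.
  exists p; split; [exact Sp | split; [exact Ip | split]].
  - exact (Lstar_idem S p e I Ip (Lstar_sym S e p Lep)).
  - exact (Lstar_idem S e p I Ie Lep).
Qed.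

(* Factoring e f = f in two ways, uniqueness of the middle factor gives p (p f) q = q. *)
Lemma factors_idem_absorb e f p q :
  factors e p e p -> factors f q f q -> e·f = f -> p·q = q.
Proof.
  intros He Hf Eef.
  pose proof (proj1 (proj2 (proj2 He))) as Ip; unfold idem in Ip.
  assert (Sz : S0 (p·(p·f)·q)) by (apply S0_quasi_ideal; [exact (proj1 He) | exact (proj1 Hf)]).
  destruct (plus_exists _ Sz) as [g Hg]; destruct (star_exists _ Sz) as [h Hh].
  pose proof (factors_mul _ _ _ _ _ _ _ _ _ _ He Hf Hg Hh) as Hef.
  rewrite Eef in Hef.
  pose proof (factors_bar_unique _ _ _ _ _ _ _ Hef Hf) as Hbar.
  rewrite <- Hbar; normalize; rw_prod Ip; reflexivity.
Qed.

Lemma L_subsemigroup : subsemigroup mul right_factor_in_S0 S.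
Proof.
  split; [intros; exact I|].
  intros x y (xb & e & f & Hx & Sf) (yb & e' & f' & Hy & Sf').
  assert (Sz : S0 (xb·(f·e')·yb)) by (apply S0_quasi_ideal; [exact (proj1 Hx) | exact (proj1 Hy)]).
  destruct (plus_exists _ Sz) as [g Hg]; destruct (star_exists _ Sz) as [h Hh].
  exists (xb·(f·e')·yb), (e·g), (h·f').
  exact (conj (factors_mul _ _ _ _ _ _ _ _ _ _ Hx Hy Hg Hh) (S0_mul h f' (proj1 Hh) Sf')).
Qed.

Lemma L_abundant : abundant mul right_factor_in_S0.
Proof.
  intros a (ab & e & f & Ha & Sf).
  pose proof (factors_Rstar mul assoc S0 _ _ _ _ Ha) as Rae.
  pose proof (factors_Lstar mul assoc S0 _ _ _ _ Ha) as Laf.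
  pose proof Ha as (_ & Ie & If & _).
  split.
  - exists e; split; [exact (left_factor_in_L a ab e f Ha)|].
    exact (conj Ie (Rstar_mono S _ a e (fun _ _ => I) Rae)).
  - exists f; split; [exact (S0_right_factor_in_S0 f Sf)|].
    exact (conj If (Lstar_mono S _ a f (fun _ _ => I) Laf)).
Qed.

Lemma L_left_adequate : left_adequate mul right_factor_in_S0.
Proof.
  split; [exact L_abundant|].
  intros a e f _ Le Lf Ie If Rae Raf.
  pose proof (Rstar_trans _ e a f (Rstar_sym _ a e Rae) Raf) as Ref.
  pose proof (Rstar_idem _ e f Le Ie Ref) as Eef.
  pose proof (Rstar_idem _ f e Lf If (Rstar_sym _ e f Ref)) as Efe.
  destruct (L_idem_Lrel e Le Ie) as (p & Sp & Ip & Hep & Hpe).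
  destruct (L_idem_Lrel f Lf If) as (q & Sq & Iq & Hfq & Hqf).
  pose proof (factors_of_Lrel e p Sp Ip Ie Hep Hpe) as Fe.
  pose proof (factors_of_Lrel f q Sq Iq If Hfq Hqf) as Ff.
  assert (Epq : p = q).
  { rewrite <- (factors_idem_absorb f e q p Ff Fe Efe), S0_idem_comm; try assumption.
    exact (factors_idem_absorb e f p q Fe Ff Eef). }
  subst q.
  (* e = e p f = e f = f, using e L p L f *)
  rewrite <- Eef; rewrite <- Hep at 2; rewrite <- assoc, Hqf, Hep; reflexivity.
Qed.

Lemma L_qi_adequate_transversal : qi_adequate_transversal mul S0 right_factor_in_S0.
Proof.
  pose proof hS0 as [[Hadeq [Hstar _]] _].
  split; [split; [exact Hadeq | split]|].
  - exact (star_subsemigroup_restrict S0 right_factor_in_S0 S (fun _ _ => I) S0_right_factor_in_S0 Hstar).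
  - intros x (xb & e & f & Hx & Sf); exists xb; split.
    + exists e, f; apply decomp_of_factors;
        [exact S0_right_factor_in_S0 | exact (left_factor_in_L x xb e f Hx)
        | exact (S0_right_factor_in_S0 f Sf) | exact Hx].
    + intros xb' (e' & f' & Hd).
      apply (decomp_mono S right_factor_in_S0 S0) in Hd; [|intros; exact I].
      exact (factors_bar_unique _ _ _ _ _ _ _ (factors_of_decomp _ _ _ _ Hd) Hx).
  - intros a b c Sa _ Sc; apply S0_quasi_ideal; assumption.
Qed.

Lemma Lset_subsemigroup : subsemigroup mul (Lset mul S S0) S.
Proof. rewrite Lset_eq; exact L_subsemigroup. Qed.

Lemma Lset_left_adequate : left_adequate mul (Lset mul S S0).
Proof. rewrite Lset_eq; exact L_left_adequate. Qed.

Lemma Lset_qi_adequate_transversal : qi_adequate_transversal mul S0 (Lset mul S S0).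
Proof. rewrite Lset_eq; exact L_qi_adequate_transversal. Qed.

End QuasiIdealTransversal.

Theorem theorem2p3 (T : Type) (mul : T -> T -> T)
  (mul_assoc : forall a b c, mul a (mul b c) = mul (mul a b) c)
  (S0 : T -> Prop)
  (hS : abundant mul (fun _ => True))
  (hS0 : qi_adequate_transversal mul S0 (fun _ => True)) :
  let R := Rset mul (fun _ => True) S0 in
  let L := Lset mul (fun _ => True) S0 in
  subsemigroup mul L (fun _ => True) /\ subsemigroup mul R (fun _ => True) /\
  left_adequate mul L /\ right_adequate mul R /\
  qi_adequate_transversal mul S0 L /\ qi_adequate_transversal mul S0 R.
Proof.
  cbv zeta; rewrite (Rset_dual mul mul_assoc).
  pose proof (dual_assoc mul mul_assoc) as dual_mul_assoc.
  pose proof (qi_adequate_transversal_dual mul mul_assoc S0 _ hS0) as hS0_dual.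
  split; [exact (Lset_subsemigroup mul mul_assoc S0 hS0)|].
  split; [exact (subsemigroup_dual mul _ _ (Lset_subsemigroup (dual mul) dual_mul_assoc S0 hS0_dual))|].
  split; [exact (Lset_left_adequate mul mul_assoc S0 hS0)|].
  split; [exact (right_adequate_of_dual mul _ (Lset_left_adequate (dual mul) dual_mul_assoc S0 hS0_dual))|].
  split; [exact (Lset_qi_adequate_transversal mul mul_assoc S0 hS0)|].
  exact (qi_adequate_transversal_dual (dual mul) dual_mul_assoc S0 _
           (Lset_qi_adequate_transversal (dual mul) dual_mul_assoc S0 hS0_dual)).
Qed.
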